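(* Let $L>0$, $U\in\mathbb{R}$, and let $\zeta,f:(-1,\infty)\to\mathbb{R}$ be smooth functions. Let $B$ be a smooth real function on $(\mathbb{R}/L\mathbb{Z})\times I$ ($I$ an open interval) with $1+B_s>0$, satisfying $$\big(B_{ttss}-B_{ssss}+\zeta(B_s)\,B_{ss}+\partial_s f(B_s)\big)(1+B_s)-B_{tt}+\partial_s\frac{(B_t-U)^2}{1+B_s}=0 .$$ Then $$I(t)=\int_0^L\big(B_t+B_{ss}B_{ts}\big)\,\mathrm{d}s$$ is independent of $t\in I$.
   Context: Subscripts denote partial derivatives in $s$ (coordinate along the tube) and $t$ (time). $B$ is the deviation of the back-to-labels map from a uniform flow with velocity $U$, and $a=B_s$ is the relative deviation of the cross-sectional area from equilibrium. The equation is the nondimensionalized equation of motion for a straight expandable tube conveying fluid with constant swirl; $\zeta$ combines wall stiffness and swirl, and $f$ is the derivative of the nonlinear part of the wall elastic energy. Periodic boundary conditions in $s$ are assumed. *)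

From Stdlib Require Import Reals Lra ClassicalEpsilon.
Open Scope R_scope.

(* Partial derivatives of a two-variable function (s,t) |-> f s t, chosen by
   classical description; meaningful wherever the derivative exists. *)
Definition pds (f : R -> R -> R) : R -> R -> R :=
  fun s t => epsilon (inhabits 0) (fun l => derivable_pt_lim (fun x => f x t) s l).
Definition pdt (f : R -> R -> R) : R -> R -> R :=
  fun s t => epsilon (inhabits 0) (fun l => derivable_pt_lim (fun y => f s y) t l).

Definition d1 (g : R -> R) : R -> R :=
  fun x => epsilon (inhabits 0) (fun l => derivable_pt_lim g x l).

Definition jcont (f : R -> R -> R) (s t : R) : Prop :=
  forall eps, 0 < eps -> exists delta, 0 < delta /\
    forall s' t', Rabs (s' - s) < delta -> Rabs (t' - t) < delta ->
      Rabs (f s' t' - f s t) < eps.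

Fixpoint Ck2 (k : nat) (I : R -> Prop) (f : R -> R -> R) : Prop :=
  match k with
  | O => forall s t, I t -> jcont f s t
  | S k' =>
      (forall s t, I t ->
         (exists l, derivable_pt_lim (fun x => f x t) s l) /\
         (exists l, derivable_pt_lim (fun y => f s y) t l)) /\
      Ck2 k' I (pds f) /\ Ck2 k' I (pdt f)
  end.
Definition smooth2 (I : R -> Prop) (f : R -> R -> R) : Prop := forall k, Ck2 k I f.

Fixpoint Ck1 (k : nat) (D : R -> Prop) (g : R -> R) : Prop :=
  match k with
  | O => forall x, D x -> continuity_pt g x
  | S k' => (forall x, D x -> exists l, derivable_pt_lim g x l) /\ Ck1 k' D (d1 g)
  end.
Definition smooth1 (D : R -> Prop) (g : R -> R) : Prop := forall k, Ck1 k D g.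

Definition open_ivl (I : R -> Prop) : Prop :=
  (exists t, I t) /\
  (forall t, I t -> exists eps, 0 < eps /\ forall u, Rabs (u - t) < eps -> I u) /\
  (forall x y z, I x -> I y -> x <= z <= y -> I z).

From Stdlib Require Import Reals Lra ClassicalEpsilon FunctionalExtensionality.
From Coquelicot Require Import Coquelicot.
Open Scope R_scope.

(* Write G = B_t + B_ss B_ts for the density.  By the symmetry of mixed
   partial derivatives its time derivative is
       E = B_tt + B_sst B_ts + B_ss B_tts,
   and the equation of motion says precisely that E = ∂_s H for the explicit
   flux
       H = B_tts (1+B_s) + B_ts²/2 - B_sss (1+B_s) + B_ss²/2
           + Z(B_s) + f(B_s)(1+B_s) - F(B_s) + (B_t-U)²/(1+B_s),
   where Z and F are primitives of y ↦ ζ(y)(1+y) and of f on (-1,∞). *)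

Lemma pds_spec g s t : (exists l, derivable_pt_lim (fun x => g x t) s l) ->
  derivable_pt_lim (fun x => g x t) s (pds g s t).
Proof. intro H; unfold pds; apply epsilon_spec; exact H. Qed.

Lemma pdt_spec g s t : (exists l, derivable_pt_lim (fun y => g s y) t l) ->
  derivable_pt_lim (fun y => g s y) t (pdt g s t).
Proof. intro H; unfold pdt; apply epsilon_spec; exact H. Qed.

Lemma pds_ext g h s t : (forall x, g x t = h x t) -> pds g s t = pds h s t.
Proof.
  intro H; unfold pds.
  replace (fun x => g x t) with (fun x => h x t)
    by (apply functional_extensionality; intro; auto).
  reflexivity.
Qed.

Lemma locally_2d_of_snd (A : R -> Prop) (P : R -> R -> Prop) s t :
  locally t A -> (forall u v, A v -> P u v) -> locally_2d P s t.
Proof.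
  intros [e He] HP; exists e; intros u v _ Hv; apply HP, He, Hv.
Qed.

Lemma locally_2d_of_fst (A : R -> Prop) (P : R -> R -> Prop) s t :
  locally s A -> (forall u v, A u -> P u v) -> locally_2d P s t.
Proof.
  intros [e He] HP; exists e; intros u v Hu _; apply HP, He, Hu.
Qed.

Lemma continuity_2d_pt_slice g s t :
  continuity_2d_pt g s t -> continuous (fun x => g x t) s.
Proof.
  intro H; apply (proj2 (filterlim_locally _ _)); intro eps.
  destruct (H eps) as [d Hd]; exists d; intros y Hy; apply Hd; [exact Hy|].
  rewrite Rminus_eq_0, Rabs_R0; apply cond_pos.
Qed.

Lemma continuity_2d_pt_swap g x y :
  continuity_2d_pt g x y -> continuity_2d_pt (fun u v => g v u) y x.
Proof.
  intros H eps; destruct (H eps) as [d Hd]; exists d; intros u v Hu Hv; apply Hd; auto.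
Qed.

Lemma derivable_pt_lim_eq g x l l' :
  derivable_pt_lim g x l -> l = l' -> derivable_pt_lim g x l'.
Proof. intros H <-; exact H. Qed.

Definition primitive (g : R -> R) (x : R) : R := RInt g 0 x.

Lemma primitive_derivable g :
  (forall x, -1 < x -> continuity_pt g x) ->
  forall x, -1 < x -> derivable_pt_lim (primitive g) x (g x).
Proof.
  intros Hg x Hx; apply is_derive_Reals.
  assert (Hnear : locally x (fun b => -1 < b)).
  { assert (He : 0 < x + 1) by lra; exists (mkposreal _ He); intros y Hy.
    change (Rabs (y - x) < x + 1) in Hy; apply Rabs_def2 in Hy; lra. }
  apply (is_derive_RInt g (primitive g) 0 x).
  - apply (filter_imp (fun b => -1 < b)); [|exact Hnear].
    intros b Hb; apply (RInt_correct g 0 b), ex_RInt_continuous; intros z Hz.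
    apply continuity_pt_filterlim, Hg.
    assert (-1 < Rmin 0 b) by (unfold Rmin; destruct Rle_dec; lra); lra.
  - apply continuity_pt_filterlim, Hg, Hx.
Qed.

Lemma RInt_derivative_periodic (h e : R -> R) L :
  (forall x, derivable_pt_lim h x (e x)) -> (forall x, continuous e x) ->
  h L = h 0 -> RInt e 0 L = 0.
Proof.
  intros Hh He Hper.
  rewrite (is_RInt_unique e 0 L (minus (h L) (h 0))).
  - rewrite Hper; unfold minus, plus, opp; simpl; ring.
  - apply (is_RInt_derive h e); intros x _; [apply is_derive_Reals, Hh | apply He].
Qed.

Section Strip.

Variable J : R -> Prop.
Hypothesis hJ : open_ivl J.

Lemma open_ivl_locally t : J t -> locally t J.
Proof.
  intro Ht; destruct hJ as [_ [Hopen _]]; destruct (Hopen t Ht) as [e [He H]].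
  exists (mkposreal e He); intros y Hy; apply H, Hy.
Qed.

Lemma smooth2_pds g : smooth2 J g -> smooth2 J (pds g).
Proof. intros H k; exact (proj1 (proj2 (H (S k)))). Qed.

Lemma smooth2_pdt g : smooth2 J g -> smooth2 J (pdt g).
Proof. intros H k; exact (proj2 (proj2 (H (S k)))). Qed.

Lemma smooth2_derivable_s g s t : smooth2 J g -> J t ->
  derivable_pt_lim (fun x => g x t) s (pds g s t).
Proof. intros H Ht; apply pds_spec; exact (proj1 (proj1 (H 1%nat) s t Ht)). Qed.

Lemma smooth2_derivable_t g s t : smooth2 J g -> J t ->
  derivable_pt_lim (fun y => g s y) t (pdt g s t).
Proof. intros H Ht; apply pdt_spec; exact (proj2 (proj1 (H 1%nat) s t Ht)). Qed.

Lemma smooth2_continuous g s t : smooth2 J g -> J t -> continuity_2d_pt g s t.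
Proof.
  intros H Ht eps; destruct (H O s t Ht eps (cond_pos eps)) as [d [Hd H']].
  exists (mkposreal d Hd); exact H'.
Qed.

Lemma Derive_s g s t : smooth2 J g -> J t -> Derive (fun x => g x t) s = pds g s t.
Proof. intros H Ht; apply is_derive_unique, is_derive_Reals, smooth2_derivable_s; auto. Qed.

Lemma Derive_t g s t : smooth2 J g -> J t -> Derive (fun y => g s y) t = pdt g s t.
Proof. intros H Ht; apply is_derive_unique, is_derive_Reals, smooth2_derivable_t; auto. Qed.

Lemma Derive_s_then_t g u v : smooth2 J g -> J v ->
  Derive (fun z => Derive (fun x => g x z) u) v = pdt (pds g) u v.
Proof.
  intros H Hv; rewrite (Derive_ext_loc _ (fun z => pds g u z)).
  - apply Derive_t; [apply smooth2_pds|]; auto.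
  - apply (filter_imp J); [intros z Hz; apply Derive_s; auto | apply open_ivl_locally; auto].
Qed.

Lemma Derive_t_then_s g u v : smooth2 J g -> J v ->
  Derive (fun z => Derive (fun y => g z y) v) u = pds (pdt g) u v.
Proof.
  intros H Hv; rewrite (Derive_ext _ (fun z => pdt g z v)).
  - apply Derive_s; [apply smooth2_pdt|]; auto.
  - intro z; apply Derive_t; auto.
Qed.

Lemma pdt_pds_comm g s t : smooth2 J g -> J t -> pdt (pds g) s t = pds (pdt g) s t.
Proof.
  intros H Ht.
  assert (Hschwarz := Schwarz g s t).
  rewrite (Derive_t_then_s g s t H Ht), (Derive_s_then_t g s t H Ht) in Hschwarz.
  symmetry; apply Hschwarz.
  - apply (locally_2d_of_snd J); [apply open_ivl_locally; auto|].
    intros u v Hv; repeat split.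
    + exists (pds g u v); apply is_derive_Reals, smooth2_derivable_s; auto.
    + exists (pdt g u v); apply is_derive_Reals, smooth2_derivable_t; auto.
    + apply (ex_derive_ext (fun z => pdt g z v)); [intro; symmetry; apply Derive_t; auto|].
      exists (pds (pdt g) u v); apply is_derive_Reals, smooth2_derivable_s;
        [apply smooth2_pdt|]; auto.
    + apply (ex_derive_ext_loc (fun z => pds g u z)).
      * apply (filter_imp J); [intros z Hz; symmetry; apply Derive_s; auto|].
        apply open_ivl_locally; auto.
      * exists (pdt (pds g) u v); apply is_derive_Reals, smooth2_derivable_t;
          [apply smooth2_pds|]; auto.
  - apply (continuity_2d_pt_ext_loc (pds (pdt g))).
    + apply (locally_2d_of_snd J); [apply open_ivl_locally; auto|].
      intros u v Hv; symmetry; apply Derive_t_then_s; auto.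
    + apply smooth2_continuous; auto; apply smooth2_pds, smooth2_pdt, H.
  - apply (continuity_2d_pt_ext_loc (pdt (pds g))).
    + apply (locally_2d_of_snd J); [apply open_ivl_locally; auto|].
      intros u v Hv; symmetry; apply Derive_s_then_t; auto.
    + apply smooth2_continuous; auto; apply smooth2_pdt, smooth2_pds, H.
Qed.

Lemma derive_RInt_strip (G E : R -> R -> R) a b y :
  (forall s t, J t -> derivable_pt_lim (fun t' => G s t') t (E s t)) ->
  (forall s t, J t -> continuity_2d_pt E s t) ->
  (forall s t, J t -> continuity_2d_pt G s t) ->
  J y -> is_derive (fun t => RInt (fun s => G s t) a b) y (RInt (fun s => E s y) a b).
Proof.
  intros HG HE HGc Hy.
  assert (HD := is_derive_RInt_param (fun t s => G s t) a b y).
  rewrite (RInt_ext _ (fun s => E s y)) in HD;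
    [| intros x _; apply is_derive_unique, is_derive_Reals, HG, Hy].
  apply HD.
  - apply (filter_imp J); [|apply open_ivl_locally, Hy].
    intros z Hz s _; exists (E s z); apply is_derive_Reals, HG, Hz.
  - intros s _; apply (continuity_2d_pt_ext_loc (fun u v => E v u)).
    + apply (locally_2d_of_fst J); [apply open_ivl_locally, Hy|].
      intros u v Hu; symmetry; apply is_derive_unique, is_derive_Reals, HG, Hu.
    + apply continuity_2d_pt_swap, HE, Hy.
  - apply (filter_imp J); [|apply open_ivl_locally, Hy].
    intros z Hz; apply (ex_RInt_continuous (fun s => G s z)); intros x _.
    apply continuity_2d_pt_slice, HGc, Hz.
Qed.

Lemma constant_of_derive_zero (F : R -> R) t1 t2 :
  (forall y, J y -> is_derive F y 0) -> J t1 -> J t2 -> F t1 = F t2.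
Proof.
  intros HF H1 H2.
  assert (Hbetween : forall z, Rmin t1 t2 <= z <= Rmax t1 t2 -> J z).
  { intros z Hz; destruct hJ as [_ [_ Hconvex]].
    unfold Rmin, Rmax in Hz; destruct Rle_dec;
      [apply (Hconvex t1 t2) | apply (Hconvex t2 t1)]; auto; lra. }
  destruct (MVT_gen F t1 t2 (fun _ => 0)) as [c [_ Hc]].
  - intros x Hx; apply HF, Hbetween; lra.
  - intros x Hx; apply continuity_pt_filterlim, (ex_derive_continuous F).
    exists 0; apply HF, Hbetween, Hx.
  - lra.
Qed.

Lemma conservation_law (G E H : R -> R -> R) L t1 t2 :
  (forall s t, J t -> derivable_pt_lim (fun t' => G s t') t (E s t)) ->
  (forall s t, J t -> derivable_pt_lim (fun s' => H s' t) s (E s t)) ->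
  (forall s t, J t -> continuity_2d_pt E s t) ->
  (forall s t, J t -> continuity_2d_pt G s t) ->
  (forall t, J t -> H L t = H 0 t) ->
  J t1 -> J t2 -> RInt (fun s => G s t1) 0 L = RInt (fun s => G s t2) 0 L.
Proof.
  intros HG HH HE HGc Hper.
  apply (constant_of_derive_zero (fun t => RInt (fun s => G s t) 0 L)).
  intros y Hy.
  assert (HD := derive_RInt_strip G E 0 L y HG HE HGc Hy).
  rewrite (RInt_derivative_periodic (fun s => H s y) (fun s => E s y) L) in HD; [exact HD|..].
  - intro x; apply HH, Hy.
  - intro x; apply continuity_2d_pt_slice, HE, Hy.
  - apply Hper, Hy.
Qed.

Variable L : R.

Definition periodic_s (g : R -> R -> R) : Prop :=
  forall s t, J t -> g (s + L) t = g s t.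

Lemma periodic_pds g : smooth2 J g -> periodic_s g -> periodic_s (pds g).
Proof.
  intros H P s t Ht.
  assert (Hshift : derivable_pt_lim (fun x => x + L) s 1).
  { replace 1 with (1 + 0) by ring.
    apply derivable_pt_lim_plus; [apply derivable_pt_lim_id | apply derivable_pt_lim_const]. }
  pose proof (derivable_pt_lim_comp _ _ s _ _ Hshift (smooth2_derivable_s g (s + L) t H Ht))
    as Hd.
  rewrite Rmult_1_r in Hd; unfold comp in Hd.
  replace (fun x => g (x + L) t) with (fun x => g x t) in Hd
    by (apply functional_extensionality; intro x; symmetry; apply P; auto).
  eapply uniqueness_limite; [exact Hd | apply smooth2_derivable_s; auto].
Qed.

Lemma periodic_pdt g : smooth2 J g -> periodic_s g -> periodic_s (pdt g).
Proof.
  intros H P s t Ht.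
  pose proof (smooth2_derivable_t g (s + L) t H Ht) as Hd; apply is_derive_Reals in Hd.
  apply (is_derive_ext_loc _ (fun y => g s y)), is_derive_Reals in Hd.
  - eapply uniqueness_limite; [exact Hd | apply smooth2_derivable_t; auto].
  - apply (filter_imp J); [intros y Hy; apply P; auto | apply open_ivl_locally; auto].
Qed.

End Strip.

Definition density (B : R -> R -> R) (s t : R) : R :=
  pdt B s t + pds (pds B) s t * pds (pdt B) s t.

Definition density_rate (B : R -> R -> R) (s t : R) : R :=
  pdt (pdt B) s t + pds (pds (pdt B)) s t * pds (pdt B) s t
  + pds (pds B) s t * pds (pdt (pdt B)) s t.

Definition kinetic (U : R) (B : R -> R -> R) (s t : R) : R :=
  (pdt B s t - U) ^ 2 / (1 + pds B s t).

Definition flux (U : R) (zeta f : R -> R) (B : R -> R -> R) (s t : R) : R :=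
  pds (pdt (pdt B)) s t * (1 + pds B s t) + pds (pdt B) s t * pds (pdt B) s t * / 2
  - pds (pds (pds B)) s t * (1 + pds B s t) + pds (pds B) s t * pds (pds B) s t * / 2
  + primitive (fun y => zeta y * (1 + y)) (pds B s t)
  + f (pds B s t) * (1 + pds B s t) - primitive f (pds B s t)
  + kinetic U B s t.

Section Tube.

Variables (J : R -> Prop) (B : R -> R -> R).
Hypothesis hJ : open_ivl J.
Hypothesis hB : smooth2 J B.

(* By Schwarz's theorem, ∂_t (B_ss) = B_sst and ∂_t (B_ts) = B_tts, so the
   time derivative of the density is the density rate. *)
Lemma density_derivative s t : J t ->
  derivable_pt_lim (fun t' => density B s t') t (density_rate B s t).
Proof.
  intro Ht.
  assert (HBs := smooth2_pds J B hB); assert (HBt := smooth2_pdt J B hB).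
  assert (Hss : pdt (pds (pds B)) s t = pds (pds (pdt B)) s t).
  { rewrite (pdt_pds_comm J hJ (pds B) s t HBs Ht).
    apply pds_ext; intro x; apply (pdt_pds_comm J hJ B x t hB Ht). }
  assert (Hts : pdt (pds (pdt B)) s t = pds (pdt (pdt B)) s t)
    by exact (pdt_pds_comm J hJ (pdt B) s t HBt Ht).
  unfold density, density_rate.
  eapply derivable_pt_lim_eq.
  - apply derivable_pt_lim_plus; [|apply derivable_pt_lim_mult];
      apply (smooth2_derivable_t J); auto; repeat apply (smooth2_pds J); auto.
  - rewrite Hss, Hts; ring.
Qed.

Lemma density_continuous s t : J t -> continuity_2d_pt (density B) s t.
Proof.
  intro Ht; unfold density.
  apply continuity_2d_pt_plus; [|apply continuity_2d_pt_mult];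
    apply (smooth2_continuous J); auto;
    repeat first [apply (smooth2_pds J) | apply (smooth2_pdt J)]; auto.
Qed.

Lemma density_rate_continuous s t : J t -> continuity_2d_pt (density_rate B) s t.
Proof.
  intro Ht; unfold density_rate.
  repeat apply continuity_2d_pt_plus; try apply continuity_2d_pt_mult;
    apply (smooth2_continuous J); auto;
    repeat first [apply (smooth2_pds J) | apply (smooth2_pdt J)]; auto.
Qed.

Variables (U : R) (zeta f : R -> R).
Hypothesis hzeta : forall x, -1 < x -> continuity_pt zeta x.
Hypothesis hf_cont : forall x, -1 < x -> continuity_pt f x.
Hypothesis hf_der : forall x, -1 < x -> exists l, derivable_pt_lim f x l.
Hypothesis hpos : forall s t, J t -> 0 < 1 + pds B s t.

(* The nonlinear terms f(B_s) and (B_t-U)²/(1+B_s) are differentiable in s,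
   so the partial derivatives occurring in the equation are genuine. *)
Lemma f_slope_derivable s t : J t ->
  derivable_pt_lim (fun x => f (pds B x t)) s (pds (fun s' t' => f (pds B s' t')) s t).
Proof.
  intro Ht; apply (pds_spec (fun s' t' => f (pds B s' t'))).
  assert (Hdom : -1 < pds B s t) by (generalize (hpos s t Ht); lra).
  destruct (hf_der _ Hdom) as [l Hl]; exists (l * pds (pds B) s t).
  apply (derivable_pt_lim_comp (fun x => pds B x t) f); [|exact Hl].
  apply (smooth2_derivable_s J); [apply (smooth2_pds J)|]; auto.
Qed.

Lemma kinetic_derivable s t : J t ->
  derivable_pt_lim (fun x => kinetic U B x t) s (pds (kinetic U B) s t).
Proof.
  intro Ht; apply pds_spec; eexists; unfold kinetic.
  apply derivable_pt_lim_div.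
  - apply (derivable_pt_lim_comp (fun x => pdt B x t - U) (fun y => y ^ 2)).
    + apply derivable_pt_lim_minus; [|apply derivable_pt_lim_const].
      apply (smooth2_derivable_s J); [apply (smooth2_pdt J)|]; auto.
    + apply derivable_pt_lim_pow.
  - apply derivable_pt_lim_plus; [apply derivable_pt_lim_const|].
    apply (smooth2_derivable_s J); [apply (smooth2_pds J)|]; auto.
  - generalize (hpos s t Ht); lra.
Qed.

(* The equation of motion, read as a conservation law: ∂_s H = E. *)
Hypothesis heq : forall s t, J t ->
  (pds (pds (pdt (pdt B))) s t - pds (pds (pds (pds B))) s t
     + zeta (pds B s t) * pds (pds B) s t
     + pds (fun s' t' => f (pds B s' t')) s t) * (1 + pds B s t)
  - pdt (pdt B) s t
  + pds (fun s' t' => (pdt B s' t' - U) ^ 2 / (1 + pds B s' t')) s t = 0.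

Lemma flux_derivative s t : J t ->
  derivable_pt_lim (fun x => flux U zeta f B x t) s (density_rate B s t).
Proof.
  intro Ht.
  assert (Hdom : -1 < pds B s t) by (generalize (hpos s t Ht); lra).
  assert (HBs := smooth2_pds J B hB).
  assert (Hprim_zeta : forall x, -1 < x ->
    continuity_pt (fun y => zeta y * (1 + y)) x).
  { intros x Hx; apply continuity_pt_mult; [apply hzeta, Hx|].
    apply continuity_pt_plus; [apply continuity_pt_const; intros u v; reflexivity|].
    apply derivable_continuous_pt, derivable_pt_id. }
  assert (Hslope := smooth2_derivable_s J (pds B) s t HBs Ht).
  assert (HZ := derivable_pt_lim_comp (fun x => pds B x t) _ s _ _ Hslope
                  (primitive_derivable _ Hprim_zeta _ Hdom)).
  assert (HF := derivable_pt_lim_comp (fun x => pds B x t) _ s _ _ Hslope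
                  (primitive_derivable _ hf_cont _ Hdom)).
  unfold comp in HZ, HF.
  assert (Hf := f_slope_derivable s t Ht).
  assert (HQ := kinetic_derivable s t Ht).
  unfold flux; eapply derivable_pt_lim_eq.
  - repeat first [ exact HZ | exact HF | exact Hf | exact HQ
                 | apply derivable_pt_lim_minus | apply derivable_pt_lim_plus
                 | apply derivable_pt_lim_mult | apply derivable_pt_lim_const ];
      apply (smooth2_derivable_s J); auto;
      repeat first [apply (smooth2_pds J) | apply (smooth2_pdt J)]; auto.
  - generalize (heq s t Ht); unfold density_rate, kinetic; lra.
Qed.

End Tube.

Lemma flux_periodic J L U zeta f B t : open_ivl J -> smooth2 J B ->
  periodic_s J L B -> J t -> flux U zeta f B L t = flux U zeta f B 0 t.
Proof.
  intros hJ hB hper Ht.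
  assert (HBs := smooth2_pds J B hB); assert (HBt := smooth2_pdt J B hB).
  assert (Pt := periodic_pdt J hJ L B hB hper).
  assert (Ps := periodic_pds J L B hB hper).
  assert (Pss := periodic_pds J L _ HBs Ps).
  assert (Psss := periodic_pds J L _ (smooth2_pds J _ HBs) Pss).
  assert (Pts := periodic_pds J L _ HBt Pt).
  assert (Ptts := periodic_pds J L _ (smooth2_pdt J _ HBt)
                    (periodic_pdt J hJ L _ HBt Pt)).
  replace L with (0 + L) at 1 by ring.
  unfold flux, kinetic.
  rewrite Pt, Ps, Pss, Psss, Pts, Ptts by exact Ht.
  reflexivity.
Qed.

Theorem mainTheorem4
  (L U : R) (zeta f : R -> R) (J : R -> Prop) (B : R -> R -> R)
  (hL : 0 < L)
  (hzeta : smooth1 (fun x => -1 < x) zeta)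
  (hf : smooth1 (fun x => -1 < x) f)
  (hI : open_ivl J)
  (hB : smooth2 J B)
  (hper : forall s t, J t -> B (s + L) t = B s t)
  (hpos : forall s t, J t -> 0 < 1 + pds B s t)
  (heq : forall s t, J t ->
     (pds (pds (pdt (pdt B))) s t - pds (pds (pds (pds B))) s t
        + zeta (pds B s t) * pds (pds B) s t
        + pds (fun s' t' => f (pds B s' t')) s t) * (1 + pds B s t)
     - pdt (pdt B) s t
     + pds (fun s' t' => (pdt B s' t' - U) ^ 2 / (1 + pds B s' t')) s t = 0) :
  forall t1 t2 (ht1 : J t1) (ht2 : J t2)
    (pr1 : Riemann_integrable
             (fun s => pdt B s t1 + pds (pds B) s t1 * pds (pdt B) s t1) 0 L)
    (pr2 : Riemann_integrable
             (fun s => pdt B s t2 + pds (pds B) s t2 * pds (pdt B) s t2) 0 L),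
    RiemannInt pr1 = RiemannInt pr2.
Proof.
  intros t1 t2 ht1 ht2 pr1 pr2.
  rewrite <- (RInt_Reals _ _ _ pr1), <- (RInt_Reals _ _ _ pr2).
  apply (conservation_law J hI (density B) (density_rate B) (flux U zeta f B) L t1 t2).
  - intros s t Ht; apply (density_derivative J); assumption.
  - intros s t Ht; apply (flux_derivative J); try assumption.
    + exact (hzeta O).
    + exact (hf O).
    + exact (proj1 (hf 1%nat)).
  - intros s t Ht; apply (density_rate_continuous J); assumption.
  - intros s t Ht; apply (density_continuous J); assumption.
  - intros t Ht; apply (flux_periodic J); assumption.
  - exact ht1.
  - exact ht2.
Qed.
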